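(* Let $E$ be a dense linear subspace of $\omega$ of countably infinite Hamel dimension. Then there exist a Hamel basis $\{v_n\}_{n\in\mathbb{N}}$ of $E$ and a bijection $\alpha:\mathbb{N}\to\mathbb{N}$ such that $\delta_{\alpha(n)}(v_n)=1$ for all $n\in\mathbb{N}$ and $\delta_{\alpha(k)}(v_n)=0$ whenever $n\in\mathbb{N}$ and $k<n$.
   Context: $\omega=\mathbb{K}^{\mathbb{N}}$ with the product topology, $\mathbb{K}\in\{\mathbb{R},\mathbb{C}\}$; $\delta_n$ denotes the $n$-th coordinate functional, $\delta_n(x)=x_n$. *)

From Stdlib Require Import Reals.
Open Scope R_scope.

(* A scalar field together with its absolute value (which induces its topology). *)
Record scalars := Scalars {
  car : Type;
  kzero : car;
  kone : car;
  kadd : car -> car -> car;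
  kmul : car -> car -> car;
  kopp : car -> car;
  kabs : car -> R
}.

Definition Kreal : scalars :=
  Scalars R 0 1 Rplus Rmult Ropp Rabs.

(* complex numbers as pairs (re, im) *)
Definition Cadd (z w : R * R) : R * R := (fst z + fst w, snd z + snd w).
Definition Cmul (z w : R * R) : R * R :=
  (fst z * fst w - snd z * snd w, fst z * snd w + snd z * fst w).
Definition Copp (z : R * R) : R * R := (- fst z, - snd z).
Definition Cabs (z : R * R) : R := sqrt (fst z * fst z + snd z * snd z).

Definition Kcomplex : scalars :=
  Scalars (R * R) (0, 0) (1, 0) Cadd Cmul Copp Cabs.

Definition omega (K : scalars) : Type := nat -> car K.

Definition delta {K : scalars} (n : nat) (x : omega K) : car K := x n.

Definition vzero {K : scalars} : omega K := fun _ => kzero K.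
Definition vadd {K : scalars} (x y : omega K) : omega K := fun i => kadd K (x i) (y i).
Definition vscale {K : scalars} (a : car K) (x : omega K) : omega K := fun i => kmul K a (x i).

Definition is_subspace {K : scalars} (E : omega K -> Prop) : Prop :=
  E vzero /\
  (forall x y, E x -> E y -> E (vadd x y)) /\
  (forall a x, E x -> E (vscale a x)).

(* density in the product topology: E meets every basic open neighbourhood
   {y | |y_i - x_i| < eps for all i < N} *)
Definition dense_in_omega {K : scalars} (E : omega K -> Prop) : Prop :=
  forall (x : omega K) (N : nat) (eps : R), 0 < eps ->
    exists e, E e /\
      forall i, (i < N)%nat -> kabs K (kadd K (e i) (kopp K (x i))) < eps.

Fixpoint lincomb {K : scalars} (c : nat -> car K) (v : nat -> omega K) (n : nat)
  : omega K :=
  match n with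
  | O => vzero
  | S m => vadd (lincomb c v m) (vscale (c m) (v m))
  end.

Definition lin_indep {K : scalars} (v : nat -> omega K) : Prop :=
  forall (n : nat) (c : nat -> car K),
    lincomb c v n = vzero -> forall i, (i < n)%nat -> c i = kzero K.

Definition hamel_basis {K : scalars} (E : omega K -> Prop) (v : nat -> omega K) : Prop :=
  (forall n, E (v n)) /\
  lin_indep v /\
  (forall x, E x -> exists (n : nat) (c : nat -> car K), x = lincomb c v n).

(* E has countably infinite Hamel dimension: it has a Hamel basis indexed by N
   (lin_indep forces the family to be injective) *)
Definition countably_infinite_dim {K : scalars} (E : omega K -> Prop) : Prop :=
  exists v : nat -> omega K, hamel_basis E v.

Definition bijective_nat (f : nat -> nat) : Prop :=
  (forall a b, f a = f b -> a = b) /\ (forall m, exists n, f n = m).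

(* Call a pair (v, a) of sequences "triangular of length n" when
   v_k(a_k) = 1 and v_k(a_i) = 0 for i < k < n.  Density of E gives, for any
   finitely many distinct coordinates, vectors of E dual to them
   ([duals]); hence every coordinate not yet used can be appended to a
   triangular system ([extend_at_coordinate]).  Gaussian elimination against
   a triangular system ([triangular_reduce]) shows that every vector of E can
   be captured in the span after appending one more vector
   ([extend_capturing]).  Alternating the two kinds of steps (even steps
   capture the spanning vectors w_j, odd steps hit the coordinates m) and
   passing to the limit by dependent choice yields a triangular sequence
   (V, A) in E that spans E and whose coordinate map A is onto; triangularity
   makes V linearly independent and A injective ([triangular_basis]).  The
   theorem follows since R and C satisfy the needed field axioms. *)

From Pilot Require Import Defs.
From Stdlib Require Import Reals Lra Lia Psatz Classical ClassicalEpsilon FunctionalExtensionality.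
From Coquelicot Require Complex.
Open Scope R_scope.

Record valued_field (K : scalars) : Prop := {
  vf_ring : ring_theory (kzero K) (kone K) (kadd K) (kmul K)
              (fun x y => kadd K x (kopp K y)) (kopp K) eq;
  vf_inv : forall x, x <> kzero K -> exists y, kmul K y x = kone K;
  vf_abs_nonneg : forall x, 0 <= kabs K x;
  vf_abs_zero : kabs K (kzero K) = 0;
  vf_abs_triangle : forall x y, kabs K (kadd K x y) <= kabs K x + kabs K y;
  vf_abs_mul : forall x y, kabs K (kmul K x y) = kabs K x * kabs K y;
  vf_abs_minus_one : kabs K (kopp K (kone K)) = 1 }.

Lemma Kreal_valued : valued_field Kreal.
Proof.
  split; simpl.
  - constructor; intros; ring.
  - intros x Hx. exists (/ x). field. exact Hx.
  - exact Rabs_pos.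
  - exact Rabs_R0.
  - exact Rabs_triang.
  - exact Rabs_mult.
  - rewrite Rabs_Ropp. exact Rabs_R1.
Qed.

(* The modulus of Defs coincides with Coquelicot's, whose theory we reuse. *)
Lemma Cabs_Cmod (z : R * R) : Cabs z = Complex.Cmod z.
Proof. unfold Cabs, Complex.Cmod. f_equal. ring. Qed.

Lemma Kcomplex_valued : valued_field Kcomplex.
Proof.
  split; simpl.
  - constructor; intros;
      repeat match goal with p : (R * R)%type |- _ => destruct p end;
      unfold Cadd, Cmul, Copp; simpl; f_equal; ring.
  - intros x Hx. exists (Complex.Cinv x). exact (Complex.Cinv_l x Hx).
  - intros x. rewrite Cabs_Cmod. apply Complex.Cmod_ge_0.
  - rewrite Cabs_Cmod. exact Complex.Cmod_0.
  - intros x y. rewrite !Cabs_Cmod. apply Complex.Cmod_triangle.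
  - intros x y. rewrite !Cabs_Cmod. apply Complex.Cmod_mult.
  - rewrite Cabs_Cmod. change (Complex.Cmod (Complex.Copp (Complex.RtoC 1)) = 1).
    rewrite Complex.Cmod_opp. exact Complex.Cmod_1.
Qed.

Lemma finite_bound (p : nat -> nat) (n : nat) :
  exists N, forall i, (i < n)%nat -> (p i < N)%nat.
Proof.
  induction n as [|n [N HN]]; [exists O; lia|].
  exists (Nat.max N (S (p n))). intros i Hi.
  destruct (Nat.eq_dec i n) as [->|Hin]; [lia|]. specialize (HN i ltac:(lia)). lia.
Qed.

Lemma dependent_choice_nat {T : Type} (P : nat -> T -> Prop) (Rel : nat -> T -> T -> Prop) (s0 : T) :
  P O s0 -> (forall n s, P n s -> exists s', P (S n) s' /\ Rel n s s') ->
  exists f : nat -> T, forall n, P n (f n) /\ Rel n (f n) (f (S n)).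
Proof.
  intros H0 Hstep.
  destruct (choice (fun (ns : nat * T) s' =>
              P (fst ns) (snd ns) -> P (S (fst ns)) s' /\ Rel (fst ns) (snd ns) s'))
    as [step Hs].
  { intros [n s]. destruct (classic (P n s)) as [H|H].
    - destruct (Hstep n s H) as [s' Hs']. exists s'. auto.
    - exists s0. simpl. tauto. }
  pose (f := fix f n := match n with O => s0 | S m => step (m, f m) end).
  assert (Hf : forall n, P n (f n)).
  { induction n; [exact H0|]. apply (Hs (n, f n)), IHn. }
  exists f. intros n. split; [apply Hf|]. apply (Hs (n, f n)), Hf.
Qed.

Lemma prefix_stable {A : Type} (g : nat -> nat -> A) :
  (forall n i, (i < n)%nat -> g (S n) i = g n i) ->
  forall k n, (k < n)%nat -> g n k = g (S k) k.
Proof.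
  intros Hg k n Hk. induction n; [lia|].
  destruct (Nat.eq_dec k n) as [->|Hkn]; [reflexivity|].
  rewrite Hg by lia. apply IHn. lia.
Qed.

Fixpoint rsum (f : nat -> R) (n : nat) : R :=
  match n with O => 0 | S m => rsum f m + f m end.

Lemma rsum_le f g n : (forall i, (i < n)%nat -> f i <= g i) -> rsum f n <= rsum g n.
Proof.
  induction n; simpl; intros H; [lra|].
  specialize (IHn (fun i Hi => H i ltac:(lia))). specialize (H n ltac:(lia)). lra.
Qed.

Lemma rsum_scale a f n : rsum (fun i => a * f i) n = a * rsum f n.
Proof. induction n; simpl; [ring|]. rewrite IHn. ring. Qed.

Lemma rsum_nonneg f n : (forall i, 0 <= f i) -> 0 <= rsum f n.
Proof. induction n; simpl; intros H; [lra|]. specialize (IHn H). specialize (H n). lra. Qed.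

Definition upd {A : Type} (f : nat -> A) (n : nat) (x : A) : nat -> A :=
  fun i => if Nat.eqb i n then x else f i.

Lemma upd_eq {A : Type} (f : nat -> A) n x : upd f n x n = x.
Proof. unfold upd. rewrite Nat.eqb_refl. reflexivity. Qed.

Lemma upd_neq {A : Type} (f : nat -> A) n x i : i <> n -> upd f n x i = f i.
Proof. intros H. unfold upd. destruct (Nat.eqb_spec i n); congruence. Qed.

Section ValuedField.

Variable K : scalars.
Hypothesis HK : valued_field K.
Add Ring Kring : (vf_ring K HK).

Local Notation kz := (kzero K).
Local Notation ko := (kone K).
Local Notation "a +k b" := (kadd K a b) (at level 50, left associativity).
Local Notation "a *k b" := (kmul K a b) (at level 40, left associativity).
Local Notation "-k a" := (kopp K a) (at level 35).

Fixpoint ksum (f : nat -> car K) (n : nat) : car K :=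
  match n with O => kz | S m => ksum f m +k f m end.

Definition vsub (x y : omega K) : omega K := vadd x (vscale (-k ko) y).

Lemma lincomb_at (c : nat -> car K) (v : nat -> omega K) n t :
  lincomb c v n t = ksum (fun i => c i *k v i t) n.
Proof. induction n; [reflexivity|]. cbn [lincomb ksum]. unfold vadd, vscale. rewrite IHn. reflexivity. Qed.

Lemma ksum_zero f n : (forall i, (i < n)%nat -> f i = kz) -> ksum f n = kz.
Proof.
  induction n; simpl; intros H; [reflexivity|].
  rewrite IHn by (intros; apply H; lia). rewrite (H n) by lia. ring.
Qed.

Lemma ksum_single f n j : (j < n)%nat ->
  (forall i, (i < n)%nat -> i <> j -> f i = kz) -> ksum f n = f j.
Proof.
  induction n; simpl; intros Hj H; [lia|].
  destruct (Nat.eq_dec j n) as [->|Hjn].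
  - rewrite ksum_zero by (intros; apply H; lia). ring.
  - rewrite (IHn ltac:(lia)) by (intros; apply H; lia). rewrite (H n) by lia. ring.
Qed.

Lemma kabs_opp x : kabs K (-k x) = kabs K x.
Proof.
  replace (-k x) with ((-k ko) *k x) by ring.
  rewrite (vf_abs_mul K HK), (vf_abs_minus_one K HK). ring.
Qed.

Lemma kabs_sum f n : kabs K (ksum f n) <= rsum (fun i => kabs K (f i)) n.
Proof.
  induction n; simpl; [rewrite (vf_abs_zero K HK); lra|].
  eapply Rle_trans; [apply (vf_abs_triangle K HK)|]. lra.
Qed.

Lemma near_one_nonzero x : kabs K (x +k -k ko) < 1 -> x <> kz.
Proof.
  intros Hx ->. replace (kz +k -k ko) with (-k ko) in Hx by ring.
  rewrite (vf_abs_minus_one K HK) in Hx. lra.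
Qed.

Lemma one_neq_zero : ko <> kz.
Proof. apply near_one_nonzero. replace (ko +k -k ko) with kz by ring. rewrite (vf_abs_zero K HK). lra. Qed.

Lemma lincomb_ext (c c' : nat -> car K) (v v' : nat -> omega K) n :
  (forall i, (i < n)%nat -> c i = c' i /\ v i = v' i) -> lincomb c v n = lincomb c' v' n.
Proof.
  induction n; simpl; intros H; [reflexivity|].
  rewrite IHn by (intros; apply H; lia). destruct (H n ltac:(lia)) as [-> ->]. reflexivity.
Qed.

Lemma lincomb_tail (c : nat -> car K) v n M : (n <= M)%nat ->
  (forall i, (n <= i < M)%nat -> c i = kz) -> lincomb c v M = lincomb c v n.
Proof.
  induction M; intros HnM Hc.
  - replace n with O by lia. reflexivity.
  - destruct (Nat.eq_dec n (S M)) as [->|]; [reflexivity|].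
    cbn [lincomb]. rewrite IHM, (Hc M) by (try intros; try apply Hc; lia).
    extensionality t. unfold vadd, vscale. ring.
Qed.

Definition Span (v : nat -> omega K) (n : nat) (x : omega K) : Prop :=
  exists c : nat -> car K, x = lincomb c v n.

Lemma span_mono v n M x : Span v n x -> (n <= M)%nat -> Span v M x.
Proof.
  intros [c ->] HnM. exists (fun i => if Nat.ltb i n then c i else kz).
  rewrite (lincomb_tail _ v n M HnM).
  - apply lincomb_ext. intros i Hi. destruct (Nat.ltb_spec i n); [auto|lia].
  - intros i Hi. destruct (Nat.ltb_spec i n); [lia|auto].
Qed.

Lemma span_agree v v' n x : (forall i, (i < n)%nat -> v' i = v i) -> Span v n x -> Span v' n x.
Proof.
  intros Hv [c ->]. exists c. apply lincomb_ext. intros i Hi. split; [reflexivity | symmetry; auto].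
Qed.

Lemma span_add v M x y : Span v M x -> Span v M y -> Span v M (vadd x y).
Proof.
  intros [c ->] [d ->]. exists (fun i => c i +k d i). extensionality t. unfold vadd at 1.
  rewrite !lincomb_at. induction M; simpl; [ring|]. rewrite <- IHM. ring.
Qed.

Lemma span_scale v M a x : Span v M x -> Span v M (vscale a x).
Proof.
  intros [c ->]. exists (fun i => a *k c i). extensionality t. unfold vscale at 1.
  rewrite !lincomb_at. induction M; simpl; [ring|]. rewrite <- IHM. ring.
Qed.

Lemma span_lincomb v (w : nat -> omega K) (d : nat -> car K) N :
  (forall j, exists M, Span v M (w j)) -> exists M, Span v M (lincomb d w N).
Proof.
  intros Hw. induction N as [|N [M HM]].
  - exists O. exists (fun _ => kz). reflexivity.
  - destruct (Hw N) as [M' HM']. exists (Nat.max M M'). cbn [lincomb]. apply span_add.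
    + apply (span_mono v M); [exact HM|lia].
    + apply span_scale, (span_mono v M'); [exact HM'|lia].
Qed.

Definition triangular (n : nat) (v : nat -> omega K) (a : nat -> nat) : Prop :=
  (forall k, (k < n)%nat -> v k (a k) = ko) /\
  (forall i k, (i < k)%nat -> (k < n)%nat -> v k (a i) = kz).

Lemma triangular_pred n v a : triangular (S n) v a -> triangular n v a.
Proof. intros [H1 H2]. split; intros; [apply H1 | apply H2]; lia. Qed.

Lemma triangular_agree n v a v' a' : triangular n v a ->
  (forall k, (k < n)%nat -> v' k = v k /\ a' k = a k) -> triangular n v' a'.
Proof.
  intros [H1 H2] Hag. split.
  - intros k Hk. destruct (Hag k Hk) as [-> ->]. auto.
  - intros i k Hik Hk. destruct (Hag k Hk) as [-> _], (Hag i ltac:(lia)) as [_ ->]. auto.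
Qed.

Lemma triangular_injective n v a : triangular n v a ->
  forall i k, (i < n)%nat -> (k < n)%nat -> a i = a k -> i = k.
Proof.
  intros [H1 H2].
  assert (Hlt : forall i k, (i < k)%nat -> (k < n)%nat -> a i <> a k).
  { intros i k Hik Hk Heq. apply one_neq_zero. rewrite <- (H1 k Hk), <- Heq. auto. }
  intros i k Hi Hk Heq. destruct (Nat.lt_trichotomy i k) as [Hik|[Hik|Hki]]; [|exact Hik|].
  - exfalso. exact (Hlt i k Hik Hk Heq).
  - exfalso. exact (Hlt k i Hki Hi (eq_sym Heq)).
Qed.

Lemma triangular_extend n v a u q : triangular n v a ->
  u q = ko -> (forall i, (i < n)%nat -> u (a i) = kz) ->
  triangular (S n) (upd v n u) (upd a n q).
Proof.
  intros [H1 H2] Huq Hua. split.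
  - intros k Hk. destruct (Nat.eq_dec k n) as [->|]; rewrite ?upd_eq, ?upd_neq by auto; auto.
    apply H1. lia.
  - intros i k Hik Hk. rewrite (upd_neq a) by lia.
    destruct (Nat.eq_dec k n) as [->|]; rewrite ?upd_eq, ?upd_neq by auto; [apply Hua | apply H2]; lia.
Qed.

Lemma triangular_reduce n v a x : triangular n v a ->
  exists c, forall i, (i < n)%nat -> vsub x (lincomb c v n) (a i) = kz.
Proof.
  induction n as [|n IH]; intros Htri.
  - exists (fun _ => kz). intros; lia.
  - destruct (IH (triangular_pred n v a Htri)) as [c Hc]. destruct Htri as [H1 H2].
    set (r := vsub x (lincomb c v n) (a n)).
    exists (upd c n r). intros i Hi. cbn [lincomb]. unfold vsub, vadd, vscale.
    rewrite (lincomb_ext (upd c n r) c v v n) by (intros; rewrite upd_neq by lia; auto).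
    rewrite upd_eq. destruct (Nat.eq_dec i n) as [->|Hin].
    + rewrite H1 by lia. unfold r, vsub, vadd, vscale. ring.
    + rewrite H2 by lia. specialize (Hc i ltac:(lia)). unfold vsub, vadd, vscale in Hc.
      transitivity (x (a i) +k -k ko *k lincomb c v n (a i)); [ring | exact Hc].
Qed.

(* A triangular sequence is linearly independent: evaluating a vanishing
   combination at a_0, a_1, ... successively kills its coefficients. *)
Lemma triangular_indep v a : (forall n, triangular n v a) -> lin_indep v.
Proof.
  intros Htri n c Hc. destruct (Htri n) as [Hone Hzero].
  assert (Hstep : forall m, (m < n)%nat -> (forall i, (i < m)%nat -> c i = kz) -> c m = kz).
  { intros m Hmn Hbelow.
    assert (Hterm : forall k, (k < n)%nat -> k <> m -> c k *k v k (a m) = kz).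
    { intros k Hk Hkm. destruct (Nat.lt_ge_cases k m) as [Hlt|Hge].
      - rewrite Hbelow by exact Hlt. ring.
      - rewrite Hzero by lia. ring. }
    pose proof (f_equal (fun x => x (a m)) Hc) as Heval. simpl in Heval.
    rewrite lincomb_at, (ksum_single _ n m Hmn Hterm), Hone in Heval by exact Hmn.
    unfold vzero in Heval. rewrite <- Heval. ring. }
  assert (Hall : forall m i, (i < m)%nat -> (i < n)%nat -> c i = kz).
  { induction m as [|m IH]; intros i Him Hin; [lia|].
    destruct (Nat.eq_dec i m) as [->|]; [|apply IH; lia].
    apply Hstep; [exact Hin|]. intros i Hi. apply IH; lia. }
  intros i Hi. exact (Hall (S i) i ltac:(lia) Hi).
Qed.

Variable E : omega K -> Prop.
Hypothesis HE : is_subspace E.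
Hypothesis Hdense : dense_in_omega E.

Lemma E_scale a x : E x -> E (vscale a x).
Proof. apply HE. Qed.

Lemma E_sub x y : E x -> E y -> E (vsub x y).
Proof. intros. apply HE; auto. apply E_scale; auto. Qed.

Lemma E_lincomb (c : nat -> car K) (v : nat -> omega K) n :
  (forall i, (i < n)%nat -> E (v i)) -> E (lincomb c v n).
Proof.
  induction n; simpl; intros H; [apply HE|].
  apply HE; [apply IHn; intros; apply H; lia | apply E_scale, H; lia].
Qed.

Definition dual_family (n : nat) (p : nat -> nat) (F : nat -> omega K) : Prop :=
  forall j, (j < n)%nat ->
    E (F j) /\ F j (p j) = ko /\ forall i, (i < n)%nat -> i <> j -> F j (p i) = kz.

(* Density step: given duals to p_0, ..., p_(n-1), a vector of E close to the
   indicator of a new coordinate p_n, corrected by the duals, vanishes at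
   p_0, ..., p_(n-1) and stays within distance < 1 of 1 at p_n. *)
Lemma vector_vanishing_before n p F :
  (forall i, (i < n)%nat -> p i <> p n) -> dual_family n p F ->
  exists g, E g /\ (forall i, (i < n)%nat -> g (p i) = kz) /\ g (p n) <> kz.
Proof.
  intros Hp HF.
  set (total := rsum (fun k => kabs K (F k (p n))) n).
  assert (Htotal : 0 <= total) by (apply rsum_nonneg; intros; apply (vf_abs_nonneg K HK)).
  set (eps := / (1 + total)).
  assert (Heps : 0 < eps) by (apply Rinv_0_lt_compat; lra).
  set (ind := fun t => if Nat.eqb t (p n) then ko else kz).
  destruct (finite_bound p (S n)) as [N HN].
  destruct (Hdense ind N eps Heps) as [e [He Hclose]].
  assert (Hen : kabs K (e (p n) +k -k ko) < eps).
  { specialize (Hclose (p n) (HN n ltac:(lia))). unfold ind in Hclose.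
    rewrite Nat.eqb_refl in Hclose. exact Hclose. }
  assert (Hek : forall k, (k < n)%nat -> kabs K (e (p k)) < eps).
  { intros k Hk. specialize (Hclose (p k) (HN k ltac:(lia))). unfold ind in Hclose.
    destruct (Nat.eqb_spec (p k) (p n)) as [Heq|_]; [exfalso; exact (Hp k Hk Heq)|].
    replace (e (p k)) with (e (p k) +k -k kz) by ring. exact Hclose. }
  set (s := ksum (fun k => e (p k) *k F k (p n)) n).
  assert (Hs : kabs K s <= eps * total).
  { eapply Rle_trans; [apply kabs_sum|]. unfold total. rewrite <- rsum_scale.
    apply rsum_le. intros i Hi. rewrite (vf_abs_mul K HK).
    apply Rmult_le_compat_r; [apply (vf_abs_nonneg K HK)|]. apply Rlt_le, Hek, Hi. }
  set (g := vsub e (lincomb (fun k => e (p k)) F n)).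
  exists g. split; [|split].
  - apply E_sub; [exact He|]. apply E_lincomb. intros i Hi. apply HF, Hi.
  - intros i Hi. unfold g, vsub, vadd, vscale. rewrite lincomb_at, (ksum_single _ n i Hi).
    + destruct (HF i Hi) as [_ [-> _]]. ring.
    + intros k Hk Hki. destruct (HF k Hk) as [_ [_ ->]]; auto. ring.
  - apply near_one_nonzero.
    replace (g (p n) +k -k ko) with ((e (p n) +k -k ko) +k -k s)
      by (unfold g, vsub, vadd, vscale, s; rewrite lincomb_at; ring).
    eapply Rle_lt_trans; [apply (vf_abs_triangle K HK)|]. rewrite kabs_opp.
    assert (Hone : eps * (1 + total) = 1) by (unfold eps; field; lra).
    nra.
Qed.

Lemma duals n p : (forall i j, (i < n)%nat -> (j < n)%nat -> p i = p j -> i = j) ->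
  exists F, dual_family n p F.
Proof.
  induction n as [|n IH]; intros Hp; [exists (fun _ => vzero); intros j Hj; lia|].
  destruct IH as [F HF]; [intros; apply Hp; lia|].
  destruct (vector_vanishing_before n p F) as [g [Hg [Hg0 Hgn]]]; [|exact HF|].
  { intros i Hi Heq. apply Hp in Heq; lia. }
  destruct (vf_inv K HK _ Hgn) as [y Hy].
  set (h := vscale y g).
  assert (Hh : E h /\ h (p n) = ko /\ forall i, (i < n)%nat -> h (p i) = kz).
  { unfold h, vscale. split; [apply E_scale, Hg | split; [exact Hy|]].
    intros i Hi. rewrite Hg0 by exact Hi. ring. }
  destruct Hh as [HhE [Hhn Hh0]].
  (* normalise g into h, then make the old duals vanish at p_n using h *)
  exists (fun j => if Nat.eqb j n then h else vsub (F j) (vscale (F j (p n)) h)).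
  intros j Hj. cbv beta. destruct (Nat.eqb_spec j n) as [->|Hjn].
  - split; [exact HhE | split; [exact Hhn|]]. intros i Hi Hin. apply Hh0. lia.
  - destruct (HF j ltac:(lia)) as [HFE [HF1 HF0]].
    split; [apply E_sub, E_scale; assumption|]. unfold vsub, vadd, vscale. split.
    + rewrite Hh0, HF1 by lia. ring.
    + intros i Hi Hij. destruct (Nat.eq_dec i n) as [->|Hin].
      * rewrite Hhn. ring.
      * rewrite Hh0, HF0 by lia. ring.
Qed.

Lemma separating_vector n p q :
  (forall i j, (i < n)%nat -> (j < n)%nat -> p i = p j -> i = j) ->
  (forall i, (i < n)%nat -> p i <> q) ->
  exists g, E g /\ g q = ko /\ forall i, (i < n)%nat -> g (p i) = kz.
Proof.
  intros Hp Hq. destruct (duals (S n) (upd p n q)) as [F HF].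
  - intros i j Hi Hj.
    destruct (Nat.eq_dec i n) as [->|Hin]; destruct (Nat.eq_dec j n) as [->|Hjn];
      rewrite ?upd_eq, ?upd_neq by auto; auto.
    + intros H. exfalso. apply (Hq j); [lia|auto].
    + intros H. exfalso. apply (Hq i); [lia|auto].
    + apply Hp; lia.
  - destruct (HF n ltac:(lia)) as [HE1 [HE2 HE3]]. rewrite upd_eq in HE2.
    exists (F n). split; [exact HE1 | split; [exact HE2|]].
    intros i Hi. rewrite <- (upd_neq p n q i) by lia. apply HE3; lia.
Qed.

Definition admissible (n : nat) (v : nat -> omega K) (a : nat -> nat) : Prop :=
  (forall k, (k < n)%nat -> E (v k)) /\ triangular n v a.

Lemma admissible_extend n v a u q : admissible n v a -> E u ->
  u q = ko -> (forall i, (i < n)%nat -> u (a i) = kz) ->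
  admissible (S n) (upd v n u) (upd a n q).
Proof.
  intros [HvE Htri] Hu Huq Hua. split; [|apply triangular_extend; assumption].
  intros k Hk. destruct (Nat.eq_dec k n) as [->|]; rewrite ?upd_eq, ?upd_neq by auto; auto.
  apply HvE. lia.
Qed.

Lemma extend_at_coordinate n v a q : admissible n v a ->
  (forall i, (i < n)%nat -> a i <> q) ->
  exists u, admissible (S n) (upd v n u) (upd a n q).
Proof.
  intros Hadm Hq.
  destruct (separating_vector n a q) as [g [Hg1 [Hg2 Hg3]]]; [|exact Hq|].
  - apply (triangular_injective n v), Hadm.
  - exists g. apply admissible_extend; assumption.
Qed.

Lemma fresh_coordinate n (a : nat -> nat) : exists q, forall i, (i < n)%nat -> a i <> q.
Proof. destruct (finite_bound a n) as [N HN]. exists N. intros i Hi. specialize (HN i Hi). lia. Qed.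

(* A vector of E outside the span: its residual after elimination is nonzero
   at some coordinate t, and its normalisation can be appended with t. *)
Lemma extend_with_residual n v a x : admissible n v a -> E x -> ~ Span v n x ->
  exists u q, admissible (S n) (upd v n u) (upd a n q) /\ Span (upd v n u) (S n) x.
Proof.
  intros Hadm Hx Hns. destruct (triangular_reduce n v a x (proj2 Hadm)) as [c Hc].
  set (r := vsub x (lincomb c v n)) in *.
  assert (Hr : exists t, r t <> kz).
  { apply NNPP. intros Hall. apply Hns. exists c. extensionality t.
    assert (Hrt : r t = kz) by (apply NNPP; eauto).
    unfold r, vsub, vadd, vscale in Hrt.
    transitivity ((x t +k -k ko *k lincomb c v n t) +k lincomb c v n t); [ring|].
    rewrite Hrt. ring. }
  destruct Hr as [t Ht]. destruct (vf_inv K HK _ Ht) as [y Hy].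
  exists (vscale y r), t. split.
  - apply admissible_extend; [exact Hadm | | exact Hy |].
    + apply E_scale, E_sub; [exact Hx|]. apply E_lincomb, Hadm.
    + intros i Hi. unfold vscale. rewrite Hc by exact Hi. ring.
  - exists (upd c n (r t)). extensionality t'. cbn [lincomb].
    rewrite (lincomb_ext (upd c n (r t)) c (upd v n (vscale y r)) v n)
      by (intros; rewrite !upd_neq by lia; auto).
    rewrite !upd_eq. unfold vadd, vscale.
    replace (r t *k (y *k r t')) with ((y *k r t) *k r t') by ring. rewrite Hy.
    unfold r, vsub, vadd, vscale. ring.
Qed.

Lemma extend_capturing n v a x : admissible n v a -> E x ->
  exists u q, admissible (S n) (upd v n u) (upd a n q) /\ Span (upd v n u) (S n) x.
Proof.
  intros Hadm Hx. destruct (classic (Span v n x)) as [Hs|Hs].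
  - destruct (fresh_coordinate n a) as [q Hq].
    destruct (extend_at_coordinate n v a q Hadm Hq) as [u Hu].
    exists u, q. split; [exact Hu|]. apply (span_mono _ n); [|lia].
    apply (span_agree v); [intros; apply upd_neq; lia | exact Hs].
  - apply extend_with_residual; assumption.
Qed.

Lemma extend_hitting n v a m : admissible n v a ->
  exists u q, admissible (S n) (upd v n u) (upd a n q) /\
    exists i, (i < S n)%nat /\ upd a n q i = m.
Proof.
  intros Hadm. destruct (classic (exists i, (i < n)%nat /\ a i = m)) as [[i [Hi Hai]]|Hm].
  - destruct (fresh_coordinate n a) as [q Hq].
    destruct (extend_at_coordinate n v a q Hadm Hq) as [u Hu].
    exists u, q. split; [exact Hu|]. exists i. split; [lia|]. rewrite upd_neq by lia. exact Hai.
  - destruct (extend_at_coordinate n v a m Hadm) as [u Hu].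
    { intros i Hi Heq. apply Hm. eauto. }
    exists u, m. split; [exact Hu|]. exists n. split; [lia|]. apply upd_eq.
Qed.

Variable w : nat -> omega K.
Hypothesis HwE : forall j, E (w j).
Hypothesis Hwspan : forall x, E x -> exists n c, x = lincomb c w n.

Definition task (n : nat) (v : nat -> omega K) (a : nat -> nat) : Prop :=
  if Nat.even n then Span v (S n) (w (Nat.div2 n))
  else exists i, (i < S n)%nat /\ a i = Nat.div2 n.

Lemma extend_for_task n v a : admissible n v a ->
  exists u q, admissible (S n) (upd v n u) (upd a n q) /\ task n (upd v n u) (upd a n q).
Proof.
  intros Hadm. unfold task. destruct (Nat.even n).
  - apply extend_capturing; [exact Hadm | apply HwE].
  - apply extend_hitting, Hadm.
Qed.

(* Dependent choice over the steps gives coherent stages, whose entries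
   stabilise; the limit (V, A) is admissible of every length and carries out
   every task. *)
Lemma admissible_limit : exists (V : nat -> omega K) (A : nat -> nat),
  (forall n, admissible n V A) /\ (forall n, task n V A).
Proof.
  destruct (dependent_choice_nat (fun n s => admissible n (fst s) (snd s))
    (fun n s s' => (forall k, (k < n)%nat -> fst s' k = fst s k /\ snd s' k = snd s k) /\
                   task n (fst s') (snd s'))
    (fun _ => vzero, fun _ => O)) as [f Hf].
  - simpl. split; [intros; lia | split; intros; lia].
  - intros n [v a] Hadm. destruct (extend_for_task n v a Hadm) as [u [q [Hext Htask]]].
    exists (upd v n u, upd a n q). simpl. split; [exact Hext|]. split; [|exact Htask].
    intros k Hk. rewrite !upd_neq by lia. auto.
  - exists (fun k => fst (f (S k)) k), (fun k => snd (f (S k)) k).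
    assert (Hagree : forall k n, (k < n)%nat ->
              fst (f n) k = fst (f (S k)) k /\ snd (f n) k = snd (f (S k)) k).
    { intros k n Hk. split.
      - apply (prefix_stable (fun n k => fst (f n) k)); [|exact Hk].
        intros m i Hi. apply (proj2 (Hf m)), Hi.
      - apply (prefix_stable (fun n k => snd (f n) k)); [|exact Hk].
        intros m i Hi. apply (proj2 (Hf m)), Hi. }
    split; intros n.
    + destruct (proj1 (Hf n)) as [HvE Htri]. split.
      * intros k Hk. rewrite <- (proj1 (Hagree k n Hk)). auto.
      * apply (triangular_agree n _ _ _ _ Htri). intros k Hk. split; symmetry; apply Hagree, Hk.
    + destruct (Hf n) as [_ [_ Ht]]. unfold task in *. destruct (Nat.even n).
      * apply (span_agree (fst (f (S n)))); [|exact Ht].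
        intros i Hi. symmetry. exact (proj1 (Hagree i (S n) Hi)).
      * destruct Ht as [i [Hi Hai]]. exists i. split; [exact Hi|].
        rewrite <- (proj2 (Hagree i (S n) Hi)). exact Hai.
Qed.

(* The limit is the required basis: triangularity gives independence, the
   diagonal values and injectivity of A; the tasks give spanning and
   surjectivity of A. *)
Theorem triangular_basis :
  exists (v : nat -> omega K) (alpha : nat -> nat),
    hamel_basis E v /\ bijective_nat alpha /\
    (forall n, delta (alpha n) (v n) = kone K) /\
    (forall n k, (k < n)%nat -> delta (alpha k) (v n) = kzero K).
Proof.
  destruct admissible_limit as [V [A [Hadm Htask]]].
  assert (Htri : forall n, triangular n V A) by (intros; apply Hadm).
  exists V, A. split; [split; [|split] | split; [split|split]].
  - intros n. apply (proj1 (Hadm (S n))). lia.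
  - exact (triangular_indep V A Htri).
  - intros x Hx. destruct (Hwspan x Hx) as [N [d ->]].
    destruct (span_lincomb V w d N) as [M [c Hc]]; [|exists M, c; exact Hc].
    intros j. exists (S (2 * j)). generalize (Htask (2 * j)%nat).
    unfold task. rewrite Nat.even_even, Nat.div2_double. auto.
  - intros i k Hik. apply (triangular_injective (S (i + k)) V A (Htri _)); [lia | lia | exact Hik].
  - intros m. generalize (Htask (2 * m + 1)%nat). unfold task.
    rewrite Nat.even_odd, Nat.div2_odd'. intros [i [_ Hi]]. exists i. exact Hi.
  - intros n. apply (proj1 (Htri (S n))). lia.
  - intros n k Hk. apply (proj2 (Htri (S n))); lia.
Qed.

End ValuedField.

Theorem lemma3p5 (K : scalars) (HK : K = Kreal \/ K = Kcomplex)
  (E : omega K -> Prop) (HE : is_subspace E) (Hdense : dense_in_omega E)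
  (Hdim : countably_infinite_dim E) :
  exists (v : nat -> omega K) (alpha : nat -> nat),
    hamel_basis E v /\ bijective_nat alpha /\
    (forall n, delta (alpha n) (v n) = kone K) /\
    (forall n k, (k < n)%nat -> delta (alpha k) (v n) = kzero K).
Proof.
  destruct Hdim as [w [HwE [_ Hwspan]]].
  assert (Hvalued : valued_field K) by (destruct HK as [-> | ->];
    [exact Kreal_valued | exact Kcomplex_valued]).
  exact (triangular_basis K Hvalued E HE Hdense w HwE Hwspan).
Qed.
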